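(* Let $H$ be a countable group, and suppose $G\le H\le K$ with $G$ finitely generated and $C_K(G)=1$. Then all terms of the normalizer tower of $H$ in $K$ are countable, and therefore the tower has countable height.
   Context: The normalizer tower of $H$ in $K$ is defined by $N^0=H$, $N^{\alpha+1}=N_K(N^\alpha)$ and $N^\alpha=\bigcup_{\beta<\alpha}N^\beta$ for limit ordinals $\alpha$. Its height is the least ordinal $\alpha$ with $N^{\alpha}=N^{\alpha+1}$. $C_K(G)$ is the centralizer of $G$ in $K$. *)

From HB Require Import structures.
From mathcomp Require Import all_boot.
From mathcomp Require Import boolp classical_sets cardinality.
Set Implicit Arguments. Unset Strict Implicit. Unset Printing Implicit Defensive.

Local Open Scope classical_set_scope.
Local Open Scope group_scope.

Section GroupDefs.
Variable K : groupType.

Definition is_subgroup (S : set K) : Prop :=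
  S 1 /\ (forall x y, S x -> S y -> S (x * y)) /\ (forall x, S x -> S x^-1).

Definition generated (A : set K) : set K :=
  [set x | forall S, is_subgroup S -> A `<=` S -> S x].

Definition fin_generated (S : set K) : Prop :=
  exists s : seq K, S = generated [set x | x \in s].

Definition centralizer (S : set K) : set K :=
  [set x | forall g, S g -> x * g = g * x].

Definition normalizer (S : set K) : set K :=
  [set x | forall s, S (x^-1 * s * x) <-> S s].

(* Strict well-orders, used as (initial segments of) the ordinals. *)
Definition strict_well_order (W : Type) (lt : W -> W -> Prop) : Prop :=
  well_founded lt /\
  (forall u v w, lt u v -> lt v w -> lt u w) /\
  (forall u v, lt u v \/ u = v \/ lt v u).

(* N is the normalizer tower of H in K indexed by the well-order (W, lt):
   N^0 = H, N^(a+1) = N_K(N^a), N^a = union_{b<a} N^b for limit a. *)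
Definition normalizer_tower (H : set K) (W : Type) (lt : W -> W -> Prop)
    (N : W -> set K) : Prop :=
  forall w,
    ((forall v, ~ lt v w) -> N w = H) /\
    (forall v, lt v w -> (forall u, ~ (lt v u /\ lt u w)) ->
        N w = normalizer (N v)) /\
    ((exists v, lt v w) -> (forall v, lt v w -> exists u, lt v u /\ lt u w) ->
        N w = \bigcup_(v in [set v | lt v w]) N v).

End GroupDefs.

From HB Require Import structures.
From mathcomp Require Import all_boot.
From mathcomp Require Import boolp classical_sets cardinality.
Set Implicit Arguments. Unset Strict Implicit. Unset Printing Implicit Defensive.

Local Open Scope classical_set_scope.

(* Let G be generated by the finite sequence s. Since C_K(G) = 1, an element
   x of K is determined by the conjugates (g ^ x)_(g in s), so the elements
   conjugating every g in s into a countable set C form a countable set.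
   Closing H under this operation omega times gives a countable set C_H, and
   C_H contains every term of the tower: G <= N^a, so every element of
   N_K(N^a) conjugates s into N^a.  Finally, if N^u < N_K(N^u) for all u < w,
   choosing for each u an element of N_K(N^u) \ N^u injects the ordinals below
   w into the countable set N^w. *)

Lemma countableU T (A B : set T) :
  countable A -> countable B -> countable (A `|` B).
Proof.
move=> cA cB; rewrite -bigcup2E.
by apply: bigcup_countable => [|[|[|i]] _ //]; exact: countableP.
Qed.

Lemma bigcup_nondecreasing_seq (T : eqType) (F : nat -> set T) (t : seq T) :
  (forall m n, (m <= n)%N -> F m `<=` F n) ->
  (forall y, y \in t -> (\bigcup_k F k) y) ->
  exists k, forall y, y \in t -> F k y.
Proof.
move=> F_mono; elim: t => [|a t IHt] t_sub; first by exists 0%N.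
have [ka _ Fa] := t_sub a (mem_head a t).
have [kt Ft] : exists k, forall y, y \in t -> F k y.
  by apply: IHt => y yt; apply: t_sub; rewrite in_cons yt orbT.
exists (maxn ka kt) => y; rewrite in_cons => /orP[/eqP->|yt].
- exact: F_mono (leq_maxl ka kt) _ Fa.
- exact: F_mono (leq_maxr ka kt) _ (Ft y yt).
Qed.

Section Subgroups.
Local Open Scope group_scope.
Variable K : groupType.
Implicit Types (A S : set K) (g x : K).

Lemma mulgJ x g : x^-1 * g * x = g ^ x.
Proof. by rewrite conjgE mulgA. Qed.

Lemma normalizer_subgroup S : is_subgroup (normalizer S).
Proof.
split; [|split] => [s|x y Nx Ny s|x Nx s] /=; rewrite mulgJ.
- by rewrite conjg1.
- by rewrite conjgM -[_ ^ y]mulgJ Ny -mulgJ Nx.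
- by rewrite -{2}(conjgKV x s) -[_ ^ x]mulgJ Nx.
Qed.

Lemma subgroup_sub_normalizer S : is_subgroup S -> S `<=` normalizer S.
Proof.
move=> [_ [S_mul S_inv]] x Sx s /=; split => [Ssx|Ss].
- have := S_mul _ _ (S_mul _ _ Sx Ssx) (S_inv _ Sx).
  by rewrite !mulgA mulgV mul1g mulgK.
- exact: S_mul (S_mul _ _ (S_inv _ Sx) Ss) Sx.
Qed.

Lemma sub_generated A : A `<=` generated A.
Proof. by move=> x Ax S _; apply. Qed.

Lemma centralizer_generated A : centralizer (generated A) = centralizer A.
Proof.
apply/seteqP; split => x cx g Ag; first by apply: cx; apply: sub_generated.
apply: (Ag [set g | x * g = g * x]) => //; split; [|split] => /=.
- by rewrite mulg1 mul1g.
- by move=> a b xa xb; rewrite mulgA xa -mulgA xb mulgA.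
- by move=> a xa; exact: commuteV.
Qed.

Lemma bigcup_chain_subgroup (I : Type) (D : set I) (F : I -> set K) :
  D !=set0 -> (forall i, D i -> is_subgroup (F i)) ->
  (forall i j, D i -> D j -> F i `<=` F j \/ F j `<=` F i) ->
  is_subgroup (\bigcup_(i in D) F i).
Proof.
move=> [i0 Di0] F_sub F_chain; split; [|split].
- by exists i0 => //; case: (F_sub i0 Di0).
- move=> x y [i Di Fx] [j Dj Fy].
  have [Fij|Fji] := F_chain i j Di Dj.
  + by exists j => //; case: (F_sub j Dj) => _ [M _]; apply: M => //; exact: Fij.
  + by exists i => //; case: (F_sub i Di) => _ [M _]; apply: M => //; exact: Fji.
- by move=> x [i Di Fx]; exists i => //; case: (F_sub i Di) => _ [_ V]; exact: V.
Qed.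

End Subgroups.

Section Tower.
Local Open Scope group_scope.
Variables (K : groupType) (H : set K) (W : Type) (lt : W -> W -> Prop).
Variable N : W -> set K.
Hypothesis lt_wo : strict_well_order lt.
Hypothesis tower : normalizer_tower H lt N.
Hypothesis H_subgroup : is_subgroup H.

Lemma zero_succ_or_limit w :
  (forall v, ~ lt v w) \/
  (exists v, lt v w /\ forall u, ~ (lt v u /\ lt u w)) \/
  ((exists v, lt v w) /\ forall v, lt v w -> exists u, lt v u /\ lt u w).
Proof.
case: (pselect (exists v, lt v w)) => [lt_w|]; last first.
  by move=> no_lt; left => v lt_vw; apply: no_lt; exists v.
right; case: (pselect (exists v, lt v w /\ forall u, ~ (lt v u /\ lt u w))).
  by left.
move=> no_pred; right; split => // v lt_vw.
apply: contrapT => no_u; apply: no_pred; exists v; split => // u vuw.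
by apply: no_u; exists u.
Qed.

Lemma tower_ind (P : set K -> Prop) :
  P H -> (forall v, P (N v) -> P (normalizer (N v))) ->
  (forall D : set W, D !=set0 -> (forall v, D v -> P (N v)) ->
     P (\bigcup_(v in D) N v)) ->
  forall w, P (N w).
Proof.
move=> P0 PS PL; case: lt_wo => wf _.
elim/(well_founded_ind wf) => w IH; have [N0 [NS NL]] := tower w.
case: (zero_succ_or_limit w) => [zero|[[v [lt_vw succ]]|[nz limit]]].
- by rewrite N0.
- by rewrite (NS v lt_vw succ); apply/PS/IH.
- by rewrite (NL nz limit); apply: PL => // v; apply: IH.
Qed.

Lemma tower_subgroup_normalizer_sub w :
  is_subgroup (N w) /\ forall u, lt u w -> normalizer (N u) `<=` N w.
Proof.
case: lt_wo => wf [_ lt_total].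
elim/(well_founded_ind wf): w => w IH; have [N0 [NS NL]] := tower w.
case: (zero_succ_or_limit w) => [zero|[[v [lt_vw succ]]|[nz limit]]].
- by rewrite N0 //; split => // u /zero.
- rewrite (NS v lt_vw succ); split => [|u lt_uw]; first exact: normalizer_subgroup.
  case: (lt_total u v) => [lt_uv|[->//|lt_vu]]; last by case: (succ u).
  have [Nv_sub Nu_sub] := IH v lt_vw.
  exact: subset_trans (Nu_sub u lt_uv) (subgroup_sub_normalizer Nv_sub).
- have N_mono v1 v2 : lt v1 w -> lt v2 w -> lt v1 v2 -> N v1 `<=` N v2.
    move=> lt1 lt2 lt12; apply: subset_trans (proj2 (IH v2 lt2) v1 lt12).
    exact/subgroup_sub_normalizer/(proj1 (IH v1 lt1)).
  rewrite (NL nz limit); split => [|u lt_uw x Nux].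
    apply: bigcup_chain_subgroup => // [v /IH[]//|v1 v2 lt1 lt2].
    by case: (lt_total v1 v2) => [lt12|[->|lt21]];
      [left; apply: N_mono|left|right; apply: N_mono].
  have [v [lt_uv lt_vw]] := limit u lt_uw.
  by exists v => //; exact: (proj2 (IH v lt_vw) u lt_uv).
Qed.

Lemma tower_subgroup w : is_subgroup (N w).
Proof. exact: (proj1 (tower_subgroup_normalizer_sub w)). Qed.

Lemma tower_normalizer_sub u w : lt u w -> normalizer (N u) `<=` N w.
Proof. exact: (proj2 (tower_subgroup_normalizer_sub w)). Qed.

Lemma sub_tower w : H `<=` N w.
Proof.
apply: (tower_ind (P := fun S => H `<=` S)) => // [v HN|D [v Dv] HN].
- exact: subset_trans HN (subgroup_sub_normalizer (tower_subgroup v)).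
- by move=> x Hx; exists v => //; apply: HN.
Qed.

Lemma tower_countable_height w :
  countable (N w) -> (forall u, lt u w -> N u <> normalizer (N u)) ->
  countable [set u | lt u w].
Proof.
move=> Nw_count proper.
have [pick pickP] : {pick : W -> K & forall u, lt u w ->
    normalizer (N u) (pick u) /\ ~ N u (pick u)}.
  apply: (@choice _ _ (fun u x => lt u w -> normalizer (N u) x /\ ~ N u x)) => u.
  case: (pselect (lt u w)) => lt_uw; last by exists 1.
  apply: contrapT => no_pick; apply: (proper u lt_uw); apply/seteqP.
  split; first exact/subgroup_sub_normalizer/tower_subgroup.
  by move=> x Nx; apply: contrapT => Nux; apply: no_pick; exists x.
have pick_in u : lt u w -> N w (pick u).
  by move=> lt_uw; apply: tower_normalizer_sub lt_uw _ (pickP u lt_uw).1.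
have /countable_injP [f f_inj] := Nw_count.
apply/countable_injP; exists (f \o pick) => u1 u2; rewrite !inE /= => lt1 lt2 f_eq.
have pick_eq : pick u1 = pick u2 by apply: f_inj f_eq; rewrite inE; apply: pick_in.
have [N1 not_N1] := pickP u1 lt1; have [N2 not_N2] := pickP u2 lt2.
case: lt_wo => _ [_ lt_total]; case: (lt_total u1 u2) => [lt12|[//|lt21]].
- by case: not_N2; rewrite -pick_eq; exact: tower_normalizer_sub lt12 _ N1.
- by case: not_N1; rewrite pick_eq; exact: tower_normalizer_sub lt21 _ N2.
Qed.

End Tower.

Section ConjugationClosure.
Local Open Scope group_scope.
Variables (K : groupType) (s : seq K).
Hypothesis s_centralizer : centralizer [set g | g \in s] `<=` [set 1].
Implicit Types (C D S : set K) (x y : K).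

Definition conj_into C : set K := [set x | forall g, g \in s -> C (g ^ x)].

Definition conj_closure C : set K :=
  \bigcup_k iter k (fun D => D `|` conj_into D) C.

Lemma conj_into_sub C D : C `<=` D -> conj_into C `<=` conj_into D.
Proof. by move=> CD x Cx g sg; apply/CD/Cx. Qed.

Lemma normalizer_sub_conj_into S :
  [set g | g \in s] `<=` S -> normalizer S `<=` conj_into S.
Proof. by move=> sS x Nx g sg; rewrite -mulgJ; apply/Nx/sS. Qed.

Lemma conj_seq_inj : injective (fun x => [seq g ^ x | g <- s]).
Proof.
move=> x y /eq_in_map conj_eq; apply/esym/divg1_eq/s_centralizer => g /= sg.
have g_fixed : g ^ (y / x) = g by rewrite conjgM -conj_eq // conjgK.
by rewrite [RHS]conjgC g_fixed.
Qed.

Lemma countable_conj_into C : countable C -> countable (conj_into C).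
Proof.
move=> /countable_injP [f f_inj]; apply/countable_injP.
pose conjs x := [seq g ^ x | g <- s].
have conjs_in x : x \in conj_into C -> all [in C] (conjs x).
  by rewrite inE => Cx; apply/allP => _ /mapP [g sg ->]; rewrite inE; apply: Cx.
exists (fun x => pickle (map f (conjs x))) => x y Cx Cy /(pcan_inj pickleK).
move/(inj_in_map f_inj); rewrite !inE.
by move=> /(_ (conjs_in x Cx) (conjs_in y Cy))/conj_seq_inj.
Qed.

Lemma countable_conj_closure C : countable C -> countable (conj_closure C).
Proof.
move=> C_count; apply: bigcup_countable => [|k _]; first exact: countableP.
by elim: k => //= k IHk; apply: countableU (countable_conj_into IHk).
Qed.

Lemma sub_conj_closure C : C `<=` conj_closure C.
Proof. by move=> x Cx; exists 0%N. Qed.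

Lemma conj_into_closure_sub C : conj_into (conj_closure C) `<=` conj_closure C.
Proof.
pose stage k := iter k (fun D => D `|` conj_into D) C.
have stage_mono m n : (m <= n)%N -> stage m `<=` stage n.
  move=> /subnK <-; elim: (n - m)%N => // i IHi x /IHi.
  by rewrite addSn; left.
move=> x x_conj.
have [k conj_k] : exists k, forall y, y \in [seq g ^ x | g <- s] -> stage k y.
  by apply: bigcup_nondecreasing_seq => // _ /mapP [g sg ->]; apply: x_conj.
by exists k.+1 => //; right => g sg; apply/conj_k/map_f.
Qed.

End ConjugationClosure.

Theorem proposition1p6 (K : groupType) (G H : set K) :
  is_subgroup G -> is_subgroup H -> G `<=` H ->
  fin_generated G -> countable H ->
  centralizer G = [set 1%g] ->
  forall (W : Type) (lt : W -> W -> Prop) (N : W -> set K),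
    strict_well_order lt -> normalizer_tower H lt N ->
    (forall w, countable (N w)) /\
    (forall w, N w = normalizer (N w) ->
       (forall u, lt u w -> N u <> normalizer (N u)) ->
       countable [set u | lt u w]).
Proof.
move=> _ H_subgroup GH [s G_gen] H_count; rewrite G_gen centralizer_generated.
move=> centralizer1 W lt N lt_wo tower.
have s_sub_N v : [set g | g \in s] `<=` N v.
  move=> g sg; apply: (sub_tower lt_wo tower H_subgroup); apply: GH.
  by rewrite G_gen; apply: sub_generated.
have N_sub_closure : forall w, N w `<=` conj_closure s H.
  apply: (tower_ind (P := fun S => S `<=` conj_closure s H) lt_wo tower)
    => [|v Nv_sub|D _ N_sub].
  - exact: sub_conj_closure.
  - apply: subset_trans (@conj_into_closure_sub _ s H).
    apply: subset_trans (conj_into_sub Nv_sub).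
    exact: normalizer_sub_conj_into (s_sub_N v).
  - by move=> x [v Dv Nvx]; apply: N_sub Dv x Nvx.
have N_count w : countable (N w).
  apply: sub_countable (subset_card_le (N_sub_closure w)) _.
  by apply: (countable_conj_closure _ H_count); rewrite centralizer1.
split=> // w _; exact: tower_countable_height.
Qed.
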